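(* Let $(M^{2n},J)$ be an almost complex manifold of real dimension $2n$ and $o\in M$. Let $(U,z)$, $z=(z^1,\dots,z^n)$, be a local complex coordinate around $o$ (i.e. the real and imaginary parts of $z^1,\dots,z^n$ form a smooth chart on $U$, not necessarily compatible with $J$) such that $\frac{\partial}{\partial z^i}\big|_o\in T^{1,0}_oM$ for $i=1,\dots,n$. Let $f$ be a holomorphic function on $U$ such that $\frac{\partial^{|\alpha|}f}{\partial z^\alpha}(o)=0$ for every multi-index $\alpha$ with $|\alpha|\le m$. Then $\mathrm{ord}_o(f)\ge m+1$.
   Context: $T^{1,0}_oM$ is the $\sqrt{-1}$-eigenspace of $J$ on $T_oM\otimes\mathbb C$. A complex function $f$ is holomorphic if $\bar\partial f=(df)^{0,1}=0$, i.e. $df$ vanishes on the $(-\sqrt{-1})$-eigenspace $T^{0,1}$ of $J$. $\mathrm{ord}_o(f)$ is the vanishing order of $f$ at $o$: the largest $k$ such that all partial derivatives of $f$ (in any smooth chart) of order $<k$ vanish at $o$. *)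

From HB Require Import structures.
From mathcomp Require Import all_boot all_order all_algebra.
From mathcomp Require Import all_classical all_reals all_analysis.
Set Implicit Arguments. Unset Strict Implicit. Unset Printing Implicit Defensive.
Import Order.TTheory GRing.Theory Num.Theory.
Import numFieldNormedType.Exports.
Local Open Scope classical_set_scope.
Local Open Scope ring_scope.

(* Everything is expressed in the given chart (U, z): a point of U is a row
   vector p : 'rV[R]_(n + n) whose coordinates are
   (x^1, ..., x^n, y^1, ..., y^n), with z^j = x^j + i y^j.
   The coordinate index of x^j is lshift n j, that of y^j is rshift n j.
   Tangent vectors are row vectors; the almost complex structure at p is a
   matrix J p acting by X |-> X *m J p.
   A complex-valued function f = u + i v is represented by the pair (u, v)
   of its real and imaginary parts. *)

Section Defs.
Variables (R : realType) (n : nat).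
Local Notation V := 'rV[R]_(n + n).

Definition ebasis (k : 'I_(n + n)) : V := \row_(l < n + n) (l == k)%:R.
Definition ex (j : 'I_n) : V := ebasis (lshift n j).
Definition ey (j : 'I_n) : V := ebasis (rshift n j).

Definition partial (k : 'I_(n + n)) (g : V -> R) : V -> R :=
  fun p => derive g p (ebasis k).

Definition iter_partial (s : seq 'I_(n + n)) (g : V -> R) : V -> R :=
  foldr partial g s.

Definition smooth_on (U : set V) (g : V -> R) : Prop :=
  forall s : seq 'I_(n + n),
    (forall p, U p -> {for p, continuous (iter_partial s g)}) /\
    (forall k p, U p -> derivable (iter_partial s g) p (ebasis k)).

Definition almost_complex_on (U : set V) (J : V -> 'M[R]_(n + n)) : Prop :=
  (forall i j, smooth_on U (fun p => J p i j)) /\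
  (forall p, U p -> J p *m J p = - 1%:M).

(* a + sqrt(-1) b lies in the sqrt(-1)-eigenspace T^{1,0} of Jp *)
Definition in_T10 (Jp : 'M[R]_(n + n)) (a b : V) : Prop :=
  a *m Jp = - b /\ b *m Jp = a.
(* a + sqrt(-1) b lies in the (-sqrt(-1))-eigenspace T^{0,1} of Jp *)
Definition in_T01 (Jp : 'M[R]_(n + n)) (a b : V) : Prop :=
  a *m Jp = b /\ b *m Jp = - a.

Definition dR (g : V -> R) (p X : V) : R :=
  \sum_(k < n + n) X 0 k * partial k g p.

(* f = u + i v is holomorphic on U: df_p = d u + i d v vanishes on
   T^{0,1}_p for every p in U, where df_p(a + i b) =
   (du a - dv b) + i (dv a + du b). *)
Definition holomorphic_on (U : set V) (J : V -> 'M[R]_(n + n))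
  (u v : V -> R) : Prop :=
  forall p, U p -> forall a b : V, in_T01 (J p) a b ->
    dR u p a - dR v p b = 0 /\ dR v p a + dR u p b = 0.

(* d/dz^j (u + i v) = 1/2 (d/dx^j - i d/dy^j)(u + i v)
   = 1/2 (u_x + v_y) + i 1/2 (v_x - u_y) *)
Definition dz (j : 'I_n) (f : (V -> R) * (V -> R)) : (V -> R) * (V -> R) :=
  (fun p => 2^-1 * (partial (lshift n j) f.1 p + partial (rshift n j) f.2 p),
   fun p => 2^-1 * (partial (lshift n j) f.2 p - partial (rshift n j) f.1 p)).

Definition dz_multi (alpha : 'I_n -> nat) (f : (V -> R) * (V -> R)) :=
  foldr (fun j g => iter (alpha j) (dz j) g) f (enum 'I_n).

Definition mindex_size (alpha : 'I_n -> nat) : nat := (\sum_(j < n) alpha j)%N.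

(* ord_o(u + i v) >= k : every partial derivative of order < k of f
   (in the smooth chart x, y) vanishes at o *)
Definition ord_ge (u v : V -> R) (o : V) (k : nat) : Prop :=
  forall s : seq 'I_(n + n), (size s < k)%N ->
    iter_partial s u o = 0 /\ iter_partial s v o = 0.

End Defs.

(* Write f = u + i v in the chart, and dzbar_j = 1/2 (d/dx^j + i d/dy^j), so that
   d/dz^j = d/dx^j - dzbar_j and d/dy^j = i d/dx^j - 2 i dzbar_j.  Since d/dz^j at o
   lies in T^{1,0}_o, the row e_{y^j} J(o) is -e_{x^j}; combined with the holomorphy
   relations at p this writes dzbar_j f(p) as 1/2 df_p(e_{y^j} (J(p) - J(o))), a sum of
   first derivatives of f with coefficients vanishing at o.  Hence dzbar_j f vanishes
   to order k at o whenever f does.  By induction on k <= m: if f vanishes to order k,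
   then, as far as derivatives of order k at o are concerned, d/dy^j acts as i d/dx^j
   and d/dz^j as d/dx^j.  Partial derivatives commute (Schwarz), so every derivative
   of order k at o is, up to a factor +-i, a pure x-derivative d^alpha f/dx^alpha(o),
   which equals d^alpha f/dz^alpha(o) = 0. *)

From HB Require Import structures.
From mathcomp Require Import all_boot all_order all_algebra.
From mathcomp Require Import all_classical all_reals all_analysis.
From mathcomp Require Import zify lra.
Import Order.TTheory GRing.Theory Num.Theory.
Import numFieldNormedType.Exports.
Local Open Scope classical_set_scope.
Local Open Scope ring_scope.

Set Implicit Arguments. Unset Strict Implicit. Unset Printing Implicit Defensive.

Section MultiIndex.
Variable n : nat.

Definition mindex_seq (alpha : 'I_n -> nat) : seq 'I_n :=
  flatten [seq nseq (alpha j) j | j <- enum 'I_n].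

Lemma size_mindex_seq alpha : size (mindex_seq alpha) = mindex_size alpha.
Proof.
rewrite size_flatten /shape -map_comp sumnE big_map big_enum /=.
by apply: eq_bigr => j _; rewrite size_nseq.
Qed.

Lemma perm_mindex_seq (t : seq 'I_n) : perm_eq t (mindex_seq (fun j => count_mem j t)).
Proof.
apply/allP => x _; apply/eqP; rewrite count_flatten sumnE !big_map -enumT big_enum /=.
rewrite (bigD1 x) //= count_nseq /= eqxx mul1n big1 ?addn0 // => j /negbTE jx.
by rewrite count_nseq /= jx mul0n.
Qed.

Lemma mindex_size_count (t : seq 'I_n) : mindex_size (fun j => count_mem j t) = size t.
Proof. by rewrite -size_mindex_seq -(perm_size (perm_mindex_seq t)). Qed.

End MultiIndex.

Section SmoothOn.
Variables (R : realType) (n : nat) (U : set 'rV[R]_(n + n)).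
Hypothesis openU : open U.
Local Notation V := 'rV[R]_(n + n).
Local Notation smooth := (smooth_on U).
Local Notation eb := (@ebasis R n).
Local Notation dx j := (partial (lshift n j)).
Local Notation dy j := (partial (rshift n j)).

Lemma iter_partial_cat s t (f : V -> R) :
  iter_partial (s ++ t) f = iter_partial s (iter_partial t f).
Proof. exact: foldr_cat. Qed.

Lemma iter_partial_rcons s k (f : V -> R) :
  iter_partial (rcons s k) f = iter_partial s (partial k f).
Proof. exact: foldr_rcons. Qed.

Lemma near_in_U p : U p -> \forall q \near p, q \in U.
Proof. by move=> Up; apply: filterS (openU Up) => q /mem_set. Qed.

Lemma eq_in_partial k (f g : V -> R) :
  {in U, f =1 g} -> {in U, partial k f =1 partial k g}.
Proof.
move=> fg p /set_mem Up; apply: near_eq_derive.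
by apply: filterS (near_in_U Up); exact: fg.
Qed.

Lemma eq_in_iter_partial s (f g : V -> R) :
  {in U, f =1 g} -> {in U, iter_partial s f =1 iter_partial s g}.
Proof. by elim: s => [|k s IHs] //= fg; apply/eq_in_partial/IHs. Qed.

Lemma smooth_on_iter_partial s (f : V -> R) : smooth f -> smooth (iter_partial s f).
Proof. by move=> sf t; rewrite -iter_partial_cat. Qed.

Lemma smooth_on_partial k (f : V -> R) : smooth f -> smooth (partial k f).
Proof. exact: (smooth_on_iter_partial [:: k]). Qed.

Lemma iter_partial_cst s (c : R) :
  iter_partial s (cst c : V -> R) = cst (if s is [::] then c else 0).
Proof.
elim: s => [|k s IHs] //; apply/funext => p.
by rewrite [LHS]/(partial k (iter_partial s _) p) IHs /partial derive_cst; case: s {IHs}.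
Qed.

Lemma smooth_on_cst (c : R) : smooth (cst c).
Proof.
move=> s; rewrite iter_partial_cst; split=> [p _ | k p _].
  exact: cst_continuous.
exact: derivable_cst.
Qed.

(** The smoothness of a product is proved by induction on this finite order. *)
Definition smooth_upto (N : nat) (f : V -> R) := forall s, (size s <= N)%N ->
  (forall p, U p -> {for p, continuous (iter_partial s f)}) /\
  (forall k p, U p -> derivable (iter_partial s f) p (@ebasis R n k)).

Lemma smooth_onP (f : V -> R) : smooth f <-> forall N, smooth_upto N f.
Proof. by split=> [sf N s _ | sf s]; [exact: sf | exact: sf (size s) s (leqnn _)]. Qed.

Lemma eq_in_smooth_upto N (f g : V -> R) :
  {in U, f =1 g} -> smooth_upto N f -> smooth_upto N g.
Proof.
move=> fg sf s sS; have [cf df] := sf s sS.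
have near_fg p : U p -> {near p, iter_partial s f =1 iter_partial s g}.
  by move=> Up; apply: filterS (near_in_U Up); exact: eq_in_iter_partial.
split=> [p Up | k p Up].
  rewrite /prop_for /continuous_at -(eq_in_iter_partial s fg (mem_set Up)).
  exact: cvg_trans (near_eq_cvg (near_fg p Up)) (cf p Up).
exact: near_eq_derivable (near_fg p Up) (df k p Up).
Qed.

Lemma smooth_uptoS N (f : V -> R) : smooth_upto 0 f ->
  (forall k, smooth_upto N (partial k f)) -> smooth_upto N.+1 f.
Proof.
move=> f0 fS s; case/lastP: s => [|s k] sS; first exact: f0.
by rewrite iter_partial_rcons; apply: fS; rewrite size_rcons in sS.
Qed.

Lemma iter_partialD_upto N s (f g : V -> R) :
  smooth_upto N f -> smooth_upto N g -> (size s <= N.+1)%N ->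
  {in U, iter_partial s (f + g) =1 iter_partial s f + iter_partial s g}.
Proof.
move=> sf sg; elim: s => [|k s IHs] //= sS p Up.
rewrite (eq_in_partial k (IHs (ltnW sS)) Up) /partial.
have [_ df] := sf s sS; have [_ dg] := sg s sS.
by rewrite deriveD //; [apply: df | apply: dg]; apply: set_mem.
Qed.

Lemma smooth_uptoD N (f g : V -> R) :
  smooth_upto N f -> smooth_upto N g -> smooth_upto N (f + g).
Proof.
move=> sf sg s sS; have fgE := iter_partialD_upto sf sg (leqW sS).
have [cf df] := sf s sS; have [cg dg] := sg s sS.
have near_fgE p : U p ->
    {near p, iter_partial s f + iter_partial s g =1 iter_partial s (f + g)}.
  by move=> Up; apply: filterS (near_in_U Up) => q /fgE.
split=> [p Up | k p Up].
  rewrite /prop_for /continuous_at (fgE p (mem_set Up)).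
  exact: cvg_trans (near_eq_cvg (near_fgE p Up)) (continuousD (cf p Up) (cg p Up)).
exact: near_eq_derivable (near_fgE p Up) (derivableD (df k p Up) (dg k p Up)).
Qed.

Lemma smooth_onD (f g : V -> R) : smooth f -> smooth g -> smooth (f + g).
Proof.
move=> /smooth_onP sf /smooth_onP sg; apply/smooth_onP => N.
exact: smooth_uptoD.
Qed.

Lemma iter_partialD s (f g : V -> R) : smooth f -> smooth g ->
  {in U, iter_partial s (f + g) =1 iter_partial s f + iter_partial s g}.
Proof.
by move=> /smooth_onP sf /smooth_onP sg; apply: (iter_partialD_upto (sf _) (sg _)).
Qed.

Lemma partialM k (f g : V -> R) : smooth f -> smooth g ->
  {in U, partial k (f * g) =1 partial k f * g + f * partial k g}.
Proof.
move=> sf sg p /set_mem Up; have [_ df] := sf [::]; have [_ dg] := sg [::].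
rewrite /partial deriveM; [|exact: df|exact: dg].
by rewrite addrC; congr (_ + _); apply: mulrC.
Qed.

Lemma smooth_upto0M (f g : V -> R) : smooth f -> smooth g -> smooth_upto 0 (f * g).
Proof.
move=> sf sg [|//] _; have [cf df] := sf [::]; have [cg dg] := sg [::].
split=> [p Up | k p Up]; first exact: continuousM (cf p Up) (cg p Up).
exact: derivableM (df k p Up) (dg k p Up).
Qed.

Lemma smooth_onM (f g : V -> R) : smooth f -> smooth g -> smooth (f * g).
Proof.
move=> sf sg; apply/smooth_onP => N; elim: N f g sf sg => [|N IHN] f g sf sg.
  exact: smooth_upto0M.
apply: (smooth_uptoS (smooth_upto0M sf sg)) => k.
apply: eq_in_smooth_upto (fun p Up => esym (partialM k sf sg Up)) _.
exact: smooth_uptoD (IHN _ _ (smooth_on_partial k sf) sg) (IHN _ _ sf (smooth_on_partial k sg)).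
Qed.

Lemma iter_partialZ s c (f : V -> R) : smooth f ->
  {in U, iter_partial s (c \*o f) =1 c \*o iter_partial s f}.
Proof.
move=> sf; elim: s => [|k s IHs] // p Up.
rewrite [LHS](eq_in_partial k IHs Up) /partial deriveMl //.
by have [_ df] := sf s; apply: df; apply: set_mem.
Qed.

Lemma smooth_onZ c (f : V -> R) : smooth f -> smooth (c \*o f).
Proof. exact: smooth_onM (smooth_on_cst c). Qed.

Lemma smooth_onN (f : V -> R) : smooth f -> smooth (- f).
Proof.
have -> : - f = (-1) \*o f by apply/funext => p; rewrite !fctE /= mulN1r.
exact: smooth_onZ.
Qed.

Lemma iter_partialN s (f : V -> R) : smooth f ->
  {in U, iter_partial s (- f) =1 - iter_partial s f}.
Proof.
move=> sf p Up; have -> : - f = (-1) \*o f by apply/funext => q; rewrite !fctE /= mulN1r.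
by rewrite (iter_partialZ s (-1) sf Up) /= mulN1r.
Qed.

Lemma smooth_onB (f g : V -> R) : smooth f -> smooth g -> smooth (f - g).
Proof. by move=> sf sg; exact/smooth_onD/smooth_onN. Qed.

Lemma iter_partialB s (f g : V -> R) : smooth f -> smooth g ->
  {in U, iter_partial s (f - g) =1 iter_partial s f - iter_partial s g}.
Proof.
move=> sf sg p Up.
by rewrite (iter_partialD s sf (smooth_onN sg) Up) !fctE (iter_partialN s sg Up).
Qed.

Lemma smooth_on_sum I (r : seq I) (P : pred I) (F : I -> V -> R) :
  (forall i, P i -> smooth (F i)) -> smooth (\sum_(i <- r | P i) F i).
Proof. by move=> sF; apply: big_ind; [exact: smooth_on_cst | exact: smooth_onD | ]. Qed.

Lemma iter_partial0 s p : iter_partial s (0 : V -> R) p = 0.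
Proof. by have := iter_partial_cst s 0; case: s => [|k s] ->. Qed.

(** * Symmetry of second derivatives *)

Lemma MVT_closed (f df : R -> R) (a b : R) : a < b ->
  (forall t, a <= t <= b -> is_derive t 1 f (df t)) ->
  exists2 c, a < c < b & f b - f a = df c * (b - a).
Proof.
move=> ab fdf.
have fdf_open t : t \in `]a, b[ -> is_derive t 1 f (df t).
  by rewrite in_itv /= => /andP[ta tb]; apply: fdf; rewrite !ltW.
have fc : {within `[a, b], continuous f}.
  apply: derivable_within_continuous => t; rewrite in_itv /= => tab.
  by have [] := fdf t tab.
by have [c] := MVT ab fdf_open fc; rewrite in_itv /=; exists c.
Qed.

Lemma is_derive_line (f : V -> R) (q e : V) (t : R) :
  derivable f (q + t *: e) e ->
  is_derive t 1 (fun s : R => f (q + s *: e)) ('D_e f (q + t *: e)).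
Proof.
have quotE : (fun h : R => h^-1 *: (((fun s => f (q + s *: e)) \o shift t) (h *: 1)
                 - f (q + t *: e))) =
             (fun h : R => h^-1 *: ((f \o shift (q + t *: e)) (h *: e) - f (q + t *: e))).
  apply/funext => h /=; congr (_ *: (f _ - _)).
  by rewrite -[h *: 1]/(h * 1) mulr1 scalerDl addrCA.
by move=> df; apply: DeriveDef; rewrite /derivable /derive quotE.
Qed.

Definition sq_diff (g : V -> R) (p a b : V) :=
  g (p + a + b) - g (p + a) - g (p + b) + g p.

Lemma sq_diffC g p a b : sq_diff g p a b = sq_diff g p b a.
Proof. by rewrite /sq_diff [p + b + a]addrAC; lra. Qed.

Lemma sq_diff_mvt g p i j h : smooth g -> 0 < h ->
  (forall s t, 0 <= s <= h -> 0 <= t <= h -> U (p + s *: eb i + t *: eb j)) ->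
  exists s t, [/\ 0 <= s <= h, 0 <= t <= h &
    sq_diff g p (h *: eb i) (h *: eb j) =
      h * h * partial j (partial i g) (p + s *: eb i + t *: eb j)].
Proof.
move=> sg h0 sqU; have [_ dg] := sg [::]; have [_ ddg] := sg [:: i].
have h00 : (0 : R) <= 0 <= h by rewrite lexx ltW.
pose phi t := g (p + h *: eb j + t *: eb i) - g (p + t *: eb i).
pose dphi t := partial i g (p + h *: eb j + t *: eb i) - partial i g (p + t *: eb i).
have phi_derive t : 0 <= t <= h -> is_derive t 1 phi (dphi t).
  move=> ht; apply: (is_deriveB (is_derive_line _) (is_derive_line _)); apply: dg.
    by rewrite addrAC; apply: sqU ht _; rewrite lexx ltW.
  by have := sqU t 0 ht h00; rewrite scale0r addr0.
have [s /andP[s0 sh] Es] := MVT_closed h0 phi_derive.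
pose psi t := partial i g (p + s *: eb i + t *: eb j).
pose dpsi t := partial j (partial i g) (p + s *: eb i + t *: eb j).
have psi_derive t : 0 <= t <= h -> is_derive t 1 psi (dpsi t).
  by move=> ht; apply: is_derive_line; apply: ddg; apply: (sqU _ _ _ ht); rewrite !ltW.
have [r /andP[r0 rh] Er] := MVT_closed h0 psi_derive.
exists s, r; split; rewrite ?ltW //.
move: Es Er; rewrite /phi /dphi /psi /dpsi !scale0r !addr0 !subr0.
rewrite [p + h *: eb j + s *: eb i]addrAC => Es Er.
rewrite Er [p + h *: eb j + h *: eb i]addrAC in Es.
by rewrite /sq_diff [RHS]mulrC mulrA -Es; lra.
Qed.

Lemma norm_ebasis k : `|eb k| <= 1.
Proof.
change (mx_norm (eb k) <= 1); rewrite mx_normrE; apply: bigmax_le => // ij _.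
by rewrite mxE; case: (ij.2 == k); rewrite ?normr1 ?normr0.
Qed.

Lemma dist_square_lt p (del s t : R) k l : 0 < del ->
  0 <= s <= del / 4 -> 0 <= t <= del / 4 -> `|p - (p + s *: eb k + t *: eb l)| < del.
Proof.
move=> del0 /andP[s0 sd] /andP[t0 td]; rewrite -addrA opprD addrA subrr add0r normrN.
apply: le_lt_trans (ler_normD _ _) _; rewrite !normrZ !ger0_norm //.
by have := norm_ebasis k; have := norm_ebasis l; nra.
Qed.

(** By the mean value theorem, [sq_diff g p (h *: eb i) (h *: eb j)] is [h * h] times
    either mixed partial derivative at points close to [p]. *)
Lemma partialC g i j p : smooth g -> U p ->
  partial i (partial j g) p = partial j (partial i g) p.
Proof.
move=> sg Up; have cA := (sg [:: j; i]).1 p Up; have cB := (sg [:: i; j]).1 p Up.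
apply/eqP; rewrite -subr_eq0 -normr_le0; apply/ler_addgt0Pr => eps eps0.
rewrite add0r; have eps2 : 0 < eps / 2 by rewrite divr_gt0.
move/cvgrPdist_lt : cA => /(_ _ eps2) nearA.
move/cvgrPdist_lt : cB => /(_ _ eps2) nearB.
have [del del0 nearP] := (nbhs_ballP _ _).1 (filterI (openU Up) (filterI nearA nearB)).
pose h := del / 4; have h0 : 0 < h by rewrite divr_gt0.
have sqP k l s t : 0 <= s <= h -> 0 <= t <= h ->
    ball p del (p + s *: eb k + t *: eb l).
  by move=> hs ht; rewrite -ball_normE /=; apply: dist_square_lt.
have sqU k l s t hs ht := (nearP _ (sqP k l s t hs ht)).1.
have [s1 [t1 [hs1 ht1 E1]]] := sq_diff_mvt sg h0 (sqU i j).
have [s2 [t2 [hs2 ht2 E2]]] := sq_diff_mvt sg h0 (sqU j i).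
have [_ [A1 _]] := nearP _ (sqP i j s1 t1 hs1 ht1).
have [_ [_ B2]] := nearP _ (sqP j i s2 t2 hs2 ht2).
have hh0 : h * h != 0 by rewrite mulf_neq0 // gt_eqF.
have /(mulfI hh0) AB := etrans (esym E1) (etrans (sq_diffC _ _ _ _) E2).
rewrite /= AB distrC in A1; rewrite /= in B2.
apply: le_trans (ler_distD (partial i (partial j g) (p + s2 *: eb j + t2 *: eb i)) _ _) _.
by rewrite [eps]splitr; exact: lerD (ltW B2) (ltW A1).
Qed.

Lemma partial_iter_partialC k s g : smooth g ->
  {in U, partial k (iter_partial s g) =1 iter_partial s (partial k g)}.
Proof.
move=> sg; elim: s => [|j s IHs] // p Up.
rewrite [LHS](partialC k j (smooth_on_iter_partial s sg) (set_mem Up)).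
exact: (eq_in_partial j IHs Up).
Qed.

Lemma perm_iter_partial s1 s2 g : smooth g -> perm_eq s1 s2 ->
  {in U, iter_partial s1 g =1 iter_partial s2 g}.
Proof.
elim: s1 s2 => [|k s1 IHs] s2 sg; first by rewrite perm_sym => /perm_nilP ->.
move=> pe; have ks2 : k \in s2 by rewrite -(perm_mem pe) mem_head.
case/splitPr: ks2 pe => s2a s2b pe.
have pe' : perm_eq s1 (s2a ++ s2b).
  by rewrite -(perm_cons k); apply: perm_trans pe _; rewrite -[k :: s2b]cat1s perm_catCA.
move=> p Up; transitivity (iter_partial (k :: s2a) (iter_partial s2b g) p).
  by rewrite -iter_partial_cat; exact: (eq_in_partial k (IHs _ sg pe') Up).
rewrite iter_partial_cat.
exact: (partial_iter_partialC k s2a (smooth_on_iter_partial s2b sg) Up).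
Qed.

Lemma ebasisM k l (M : 'M[R]_(n + n)) : (eb k *m M) 0 l = M k l.
Proof.
rewrite !mxE (bigD1 k) //= mxE eqxx mul1r big1 ?addr0 // => i /negbTE ik.
by rewrite mxE ik mul0r.
Qed.

Lemma dR_ebasis g p k : dR g p (eb k) = partial k g p.
Proof.
rewrite /dR (bigD1 k) //= mxE eqxx mul1r big1 ?addr0 // => i /negbTE ik.
by rewrite mxE ik mul0r.
Qed.

(** [dzbar j f] is [df/dzbar^j = 1/2 (d/dx^j + i d/dy^j) f] for [f = f.1 + i f.2]. *)
Definition dzbar (j : 'I_n) (f : (V -> R) * (V -> R)) : (V -> R) * (V -> R) :=
  (2^-1 \*o (dx j f.1 - dy j f.2), 2^-1 \*o (dx j f.2 + dy j f.1)).

Lemma dz_dzbar j f : dz j f = (dx j f.1 - (dzbar j f).1, dx j f.2 - (dzbar j f).2).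
Proof. by congr pair; apply/funext => p; rewrite /= !fctE /=; lra. Qed.

Lemma dy_dzbar j f :
  dy j f.1 = 2 \*o (dzbar j f).2 - dx j f.2 /\ dy j f.2 = dx j f.1 - 2 \*o (dzbar j f).1.
Proof. by split; apply/funext => p; rewrite /= !fctE /=; lra. Qed.

Lemma smooth_dzbar j F : smooth F.1 -> smooth F.2 ->
  smooth (dzbar j F).1 /\ smooth (dzbar j F).2.
Proof.
move=> sF1 sF2; split; apply: smooth_onZ.
  exact: smooth_onB (smooth_on_partial _ sF1) (smooth_on_partial _ sF2).
exact: smooth_onD (smooth_on_partial _ sF2) (smooth_on_partial _ sF1).
Qed.

Lemma smooth_dz j F : smooth F.1 -> smooth F.2 -> smooth (dz j F).1 /\ smooth (dz j F).2.
Proof.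
move=> sF1 sF2; have [sd1 sd2] := smooth_dzbar j sF1 sF2; rewrite dz_dzbar.
by split; [exact: smooth_onB (smooth_on_partial _ sF1) sd1 |
           exact: smooth_onB (smooth_on_partial _ sF2) sd2].
Qed.

Lemma iter_partial_dzbar j s F : smooth F.1 -> smooth F.2 ->
  {in U, (dzbar j (iter_partial s F.1, iter_partial s F.2)).1 =1
         iter_partial s (dzbar j F).1} /\
  {in U, (dzbar j (iter_partial s F.1, iter_partial s F.2)).2 =1
         iter_partial s (dzbar j F).2}.
Proof.
move=> sF1 sF2.
have sxF1 := smooth_on_partial (lshift n j) sF1.
have syF1 := smooth_on_partial (rshift n j) sF1.
have sxF2 := smooth_on_partial (lshift n j) sF2.
have syF2 := smooth_on_partial (rshift n j) sF2.
split=> p Up /=.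
  rewrite (iter_partialZ s _ (smooth_onB sxF1 syF2) Up) /= (iter_partialB s sxF1 syF2 Up).
  by rewrite !fctE (partial_iter_partialC _ s sF1 Up) (partial_iter_partialC _ s sF2 Up).
rewrite (iter_partialZ s _ (smooth_onD sxF2 syF1) Up) /= (iter_partialD s sxF2 syF1 Up).
by rewrite !fctE (partial_iter_partialC _ s sF1 Up) (partial_iter_partialC _ s sF2 Up).
Qed.

Definition dz_seq (js : seq 'I_n) (F : (V -> R) * (V -> R)) := foldr (@dz R n) F js.

Lemma dz_multiE alpha F : dz_multi alpha F = dz_seq (mindex_seq alpha) F.
Proof.
rewrite /dz_multi /dz_seq /mindex_seq; elim: (enum 'I_n) => //= j js ->.
by rewrite foldr_cat; elim: (alpha j) => //= a ->.
Qed.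

Section Jets.
Variable o : V.
Hypothesis Uo : U o.
Let oU : o \in U := mem_set Uo.

Definition jet_eq (k : nat) (f g : V -> R) :=
  forall s, (size s < k)%N -> iter_partial s f o = iter_partial s g o.

Lemma ord_geE (u v : V -> R) k : ord_ge u v o k <-> jet_eq k u 0 /\ jet_eq k v 0.
Proof.
split=> [uv | [u0 v0] s ks]; first by split=> s ks; rewrite iter_partial0; case: (uv s ks).
by rewrite u0 // v0 // iter_partial0.
Qed.

Lemma eq_in_jet_eq k (f g : V -> R) : {in U, f =1 g} -> jet_eq k f g.
Proof. by move=> fg s _; apply: (eq_in_iter_partial s fg); apply: mem_set. Qed.

Lemma jet_eq_trans k (f g h : V -> R) : jet_eq k f g -> jet_eq k g h -> jet_eq k f h.
Proof. by move=> fg gh s ks; rewrite fg // gh. Qed.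

Lemma jet_eq_le j k (f g : V -> R) : (j <= k)%N -> jet_eq k f g -> jet_eq j f g.
Proof. by move=> jk fg s sj; apply: fg; apply: leq_trans jk. Qed.

Lemma jet_eq_iter_partial s k (f g : V -> R) :
  jet_eq (size s + k) f g -> jet_eq k (iter_partial s f) (iter_partial s g).
Proof. by move=> fg t tk; rewrite -!iter_partial_cat fg // size_cat; lia. Qed.

Lemma jet_eq_partial i k (f g : V -> R) :
  jet_eq k f g -> jet_eq k.-1 (partial i f) (partial i g).
Proof. by move=> fg s sk; rewrite -!iter_partial_rcons fg // size_rcons; lia. Qed.

Lemma jet_eq0_iter_partial s k (f : V -> R) :
  jet_eq (size s + k) f 0 -> jet_eq k (iter_partial s f) 0.
Proof.
by move/jet_eq_iter_partial => f0 t tk; rewrite f0 // -iter_partial_cat !iter_partial0.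
Qed.

Lemma jet_eq0_partial i k (f : V -> R) : jet_eq k f 0 -> jet_eq k.-1 (partial i f) 0.
Proof.
by move/(jet_eq_partial i) => f0 s sk; rewrite f0 // -iter_partial_rcons !iter_partial0.
Qed.

Lemma jet_eq_subr0 k (f g h : V -> R) : smooth f -> smooth h ->
  jet_eq k f g -> jet_eq k h 0 -> jet_eq k (f - h) g.
Proof.
move=> sf sh fg h0 s sk.
by rewrite (iter_partialB s sf sh oU) !fctE fg // h0 // iter_partial0 subr0.
Qed.

Lemma jet_eqD k (f1 f2 g1 g2 : V -> R) :
  smooth f1 -> smooth f2 -> smooth g1 -> smooth g2 ->
  jet_eq k f1 g1 -> jet_eq k f2 g2 -> jet_eq k (f1 + f2) (g1 + g2).
Proof.
move=> sf1 sf2 sg1 sg2 fg1 fg2 s sk.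
by rewrite (iter_partialD s sf1 sf2 oU) (iter_partialD s sg1 sg2 oU) !fctE fg1 // fg2.
Qed.

Lemma jet_eqB k (f1 f2 g1 g2 : V -> R) :
  smooth f1 -> smooth f2 -> smooth g1 -> smooth g2 ->
  jet_eq k f1 g1 -> jet_eq k f2 g2 -> jet_eq k (f1 - f2) (g1 - g2).
Proof.
move=> sf1 sf2 sg1 sg2 fg1 fg2 s sk.
by rewrite (iter_partialB s sf1 sf2 oU) (iter_partialB s sg1 sg2 oU) !fctE fg1 // fg2.
Qed.

Lemma jet_eqZ k c (f g : V -> R) : smooth f -> smooth g ->
  jet_eq k f g -> jet_eq k (c \*o f) (c \*o g).
Proof.
move=> sf sg fg s sk.
by rewrite (iter_partialZ s c sf oU) (iter_partialZ s c sg oU) /= fg.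
Qed.

Lemma jet_eq0M a b (f g : V -> R) : smooth f -> smooth g ->
  jet_eq a f 0 -> jet_eq b g 0 -> jet_eq (a + b) (f * g) 0.
Proof.
move=> + + + + s; elim/last_ind: s a b f g => [|s k IHs] a b f g sf sg f0 g0 sab.
  rewrite iter_partial0 /= mulrfctE; case: a f0 sab => [|a] f0 sab.
    by have /= -> := g0 [::] sab; rewrite mulr0.
  by have /= -> := f0 [::] (ltn0Sn _); rewrite mul0r.
rewrite size_rcons in sab; rewrite iter_partial0 iter_partial_rcons.
have sf'g := smooth_onM (smooth_on_partial k sf) sg.
have sfg' := smooth_onM sf (smooth_on_partial k sg).
rewrite (eq_in_iter_partial s (partialM k sf sg) oU) (iter_partialD s sf'g sfg' oU) !fctE.
rewrite (IHs a.-1 b _ _ (smooth_on_partial k sf) sg (jet_eq0_partial k f0) g0); last by lia.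
rewrite (IHs a b.-1 _ _ sf (smooth_on_partial k sg) f0 (jet_eq0_partial k g0)); last by lia.
by rewrite iter_partial0 addr0.
Qed.

Lemma jet_eq0_sum k I (r : seq I) (P : pred I) (F : I -> V -> R) :
  (forall i, P i -> smooth (F i)) -> (forall i, P i -> jet_eq k (F i) 0) ->
  jet_eq k (\sum_(i <- r | P i) F i) 0.
Proof.
move=> sF F0; suff [] : smooth (\sum_(i <- r | P i) F i) /\
    jet_eq k (\sum_(i <- r | P i) F i) 0 by [].
apply: (big_ind (fun G => smooth G /\ jet_eq k G 0)) => [|G H [sG G0] [sH H0] | i Pi].
- by split=> //; exact: smooth_on_cst.
- split; first exact: smooth_onD.
  by rewrite -[0](addr0 0); exact: jet_eqD sG sH (smooth_on_cst 0) (smooth_on_cst 0) G0 H0.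
- by split; [exact: sF | exact: F0].
Qed.

Lemma jet_eq_dzbar j r F G :
  smooth F.1 -> smooth F.2 -> smooth G.1 -> smooth G.2 ->
  jet_eq r.+1 F.1 G.1 -> jet_eq r.+1 F.2 G.2 ->
  jet_eq r (dzbar j F).1 (dzbar j G).1 /\ jet_eq r (dzbar j F).2 (dzbar j G).2.
Proof.
move=> sF1 sF2 sG1 sG2 FG1 FG2.
have sxF1 := smooth_on_partial (lshift n j) sF1.
have syF1 := smooth_on_partial (rshift n j) sF1.
have sxF2 := smooth_on_partial (lshift n j) sF2.
have syF2 := smooth_on_partial (rshift n j) sF2.
have sxG1 := smooth_on_partial (lshift n j) sG1.
have syG1 := smooth_on_partial (rshift n j) sG1.
have sxG2 := smooth_on_partial (lshift n j) sG2.
have syG2 := smooth_on_partial (rshift n j) sG2.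
split; apply: jet_eqZ.
- exact: smooth_onB sxF1 syF2.
- exact: smooth_onB sxG1 syG2.
- exact: jet_eqB sxF1 syF2 sxG1 syG2 (jet_eq_partial _ FG1) (jet_eq_partial _ FG2).
- exact: smooth_onD sxF2 syF1.
- exact: smooth_onD sxG2 syG1.
- exact: jet_eqD sxF2 syF1 sxG2 syG1 (jet_eq_partial _ FG2) (jet_eq_partial _ FG1).
Qed.

Lemma jet_eq_dz j r w F P :
  smooth F.1 -> smooth F.2 -> smooth P.1 -> smooth P.2 ->
  jet_eq (size w + r) (dzbar j F).1 0 -> jet_eq (size w + r) (dzbar j F).2 0 ->
  jet_eq r.+1 P.1 (iter_partial w F.1) -> jet_eq r.+1 P.2 (iter_partial w F.2) ->
  jet_eq r (dz j P).1 (iter_partial (lshift n j :: w) F.1) /\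
  jet_eq r (dz j P).2 (iter_partial (lshift n j :: w) F.2).
Proof.
move=> sF1 sF2 sP1 sP2 dF1 dF2 PF1 PF2.
have sFw1 := smooth_on_iter_partial w sF1; have sFw2 := smooth_on_iter_partial w sF2.
have [sdP1 sdP2] := smooth_dzbar j sP1 sP2.
have [dP1 dP2] :=
  jet_eq_dzbar j (G := (iter_partial w F.1, iter_partial w F.2)) sP1 sP2 sFw1 sFw2 PF1 PF2.
have [dFw1 dFw2] := iter_partial_dzbar j w sF1 sF2.
have dP1_0 : jet_eq r (dzbar j P).1 0.
  apply: jet_eq_trans dP1 (jet_eq_trans (eq_in_jet_eq dFw1) _).
  exact: jet_eq0_iter_partial.
have dP2_0 : jet_eq r (dzbar j P).2 0.
  apply: jet_eq_trans dP2 (jet_eq_trans (eq_in_jet_eq dFw2) _).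
  exact: jet_eq0_iter_partial.
rewrite dz_dzbar; split.
  exact: jet_eq_subr0 (smooth_on_partial _ sP1) sdP1 (jet_eq_partial _ PF1) dP1_0.
exact: jet_eq_subr0 (smooth_on_partial _ sP2) sdP2 (jet_eq_partial _ PF2) dP2_0.
Qed.

Lemma jet_eq_dy j k F : smooth F.1 -> smooth F.2 ->
  jet_eq k (dzbar j F).1 0 -> jet_eq k (dzbar j F).2 0 ->
  jet_eq k (dy j F.1) (- dx j F.2) /\ jet_eq k (dy j F.2) (dx j F.1).
Proof.
move=> sF1 sF2 dF1 dF2; have [sd1 sd2] := smooth_dzbar j sF1 sF2.
have sxF1 := smooth_on_partial (lshift n j) sF1.
have sxF2 := smooth_on_partial (lshift n j) sF2.
have [-> ->] := dy_dzbar j F; split=> s sk.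
  rewrite (iter_partialB s (smooth_onZ 2 sd2) sxF2 oU) (iter_partialN s sxF2 oU) !fctE.
  by rewrite (iter_partialZ s 2 sd2 oU) /= dF2 // iter_partial0 mulr0 sub0r.
rewrite (iter_partialB s sxF1 (smooth_onZ 2 sd1) oU) !fctE.
by rewrite (iter_partialZ s 2 sd1 oU) /= dF1 // iter_partial0 mulr0 subr0.
Qed.

Definition dzbar_ord_ge k F :=
  forall j, jet_eq k (dzbar j F).1 0 /\ jet_eq k (dzbar j F).2 0.

Lemma jet_eq_dz_seq k F js : smooth F.1 -> smooth F.2 ->
  dzbar_ord_ge k F ->
  (size js <= k)%N ->
  [/\ smooth (dz_seq js F).1, smooth (dz_seq js F).2,
      jet_eq (k.+1 - size js) (dz_seq js F).1 (iter_partial (map (lshift n) js) F.1)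
    & jet_eq (k.+1 - size js) (dz_seq js F).2 (iter_partial (map (lshift n) js) F.2)].
Proof.
move=> sF1 sF2 dF; elim: js => [|j js IHjs] jsk.
  by split; [exact: sF1 | exact: sF2 | move=> s _ | move=> s _].
have [sP1 sP2 PF1 PF2] := IHjs (ltnW jsk).
have [sQ1 sQ2] := smooth_dz j sP1 sP2.
have jsk' : (size js <= k)%N by apply: ltnW.
rewrite subSn // in PF1 PF2; rewrite /= subSS.
have wk : (size (map (lshift n) js) + (k - size js) <= k)%N by rewrite size_map subnKC.
have [d1 d2] := dF j.
have [Q1 Q2] := jet_eq_dz sF1 sF2 sP1 sP2 (jet_eq_le wk d1) (jet_eq_le wk d2) PF1 PF2.
by split.
Qed.

Lemma dz_multi_dx k F t : smooth F.1 -> smooth F.2 ->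
  dzbar_ord_ge k F ->
  (size t <= k)%N ->
  (dz_multi (fun j => count_mem j t) F).1 o = iter_partial (map (lshift n) t) F.1 o /\
  (dz_multi (fun j => count_mem j t) F).2 o = iter_partial (map (lshift n) t) F.2 o.
Proof.
move=> sF1 sF2 dF tk; have pt := perm_mindex_seq t.
have ptx := perm_map (lshift n) pt.
have [_ _ E1 E2] := jet_eq_dz_seq sF1 sF2 dF (leq_trans (eq_leq (esym (perm_size pt))) tk).
have pos : (0 < k.+1 - size (mindex_seq (fun j => count_mem j t)))%N.
  by rewrite subn_gt0 ltnS -(perm_size pt).
rewrite dz_multiE; split.
  exact: etrans (E1 [::] pos) (esym (perm_iter_partial sF1 ptx oU)).
exact: etrans (E2 [::] pos) (esym (perm_iter_partial sF2 ptx oU)).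
Qed.

(** Induction on the number of [y]-derivatives, each traded for an [x]-derivative by
    [jet_eq_dy]. *)
Lemma iter_partial_eq0_of_dx k F : smooth F.1 -> smooth F.2 ->
  dzbar_ord_ge k F ->
  (forall t : seq 'I_n, size t = k -> iter_partial (map (lshift n) t) F.1 o = 0 /\
                                      iter_partial (map (lshift n) t) F.2 o = 0) ->
  forall s, size s = k -> iter_partial s F.1 o = 0 /\ iter_partial s F.2 o = 0.
Proof.
move=> sF1 sF2 dF dx0 s; pose is_y (c : 'I_(n + n)) := (n <= c)%N.
have [N] := ubnP (count is_y s); elim: N s => // N IHN s cN sk.
have [/hasP[c cs yc] | /hasPn no_y] := boolP (has is_y s); last first.
  pose xc (c : 'I_(n + n)) : 'I_n := match fintype.split c with inl j | inr j => j end.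
  have -> : s = map (lshift n) (map xc s).
    rewrite -map_comp map_id_in // => c cs /=; rewrite /xc.
    case E: (fintype.split c) (splitK c) => [j|j] cE; first by rewrite -cE.
    by move: (no_y c cs); rewrite -cE /is_y /= leq_addr.
  by apply: dx0; rewrite !size_map.
have [j cE] : exists j, c = rshift n j.
  case E: (fintype.split c) (splitK c) yc => [j|j] <- yc; last by exists j.
  by move: yc; rewrite /is_y /= leqNgt ltn_ord.
rewrite {c yc}cE in cs.
case/splitPr: cs cN sk => s1 s2 cN sk; set w := s1 ++ s2.
have perm_s : perm_eq (s1 ++ rshift n j :: s2) (rcons w (rshift n j)).
  by rewrite -cats1 -catA perm_cat2l -cat1s perm_catC.
have wk : (size w < k)%N by move: sk; rewrite /w !size_cat /=; lia.
have [] := IHN (rcons w (lshift n j)).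
- by move: cN; rewrite -cats1 !count_cat /= /is_y /= leq_addr (leqNgt n j) ltn_ord; lia.
- by move: sk; rewrite size_rcons /w !size_cat /=; lia.
rewrite !iter_partial_rcons => x1 x2.
have [dy1 dy2] := jet_eq_dy sF1 sF2 (dF j).1 (dF j).2.
rewrite (perm_iter_partial sF1 perm_s oU) (perm_iter_partial sF2 perm_s oU).
rewrite !iter_partial_rcons (dy1 w wk) (dy2 w wk).
by rewrite (iter_partialN w (smooth_on_partial _ sF2) oU) !fctE x1 x2 oppr0.
Qed.

Lemma jet_eq0_dz_multi m F : smooth F.1 -> smooth F.2 ->
  (forall k, (k <= m)%N -> jet_eq k F.1 0 -> jet_eq k F.2 0 -> dzbar_ord_ge k F) ->
  (forall alpha, (mindex_size alpha <= m)%N ->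
     (dz_multi alpha F).1 o = 0 /\ (dz_multi alpha F).2 o = 0) ->
  jet_eq m.+1 F.1 0 /\ jet_eq m.+1 F.2 0.
Proof.
move=> sF1 sF2 dF dz0; suff: forall k, (k <= m.+1)%N -> jet_eq k F.1 0 /\ jet_eq k F.2 0.
  exact.
elim=> [_ | k IHk km]; first by split=> s.
have [F1k F2k] := IHk (ltnW km); have {}dF := dF k km F1k F2k.
have dx0 t : size t = k -> iter_partial (map (lshift n) t) F.1 o = 0 /\
                           iter_partial (map (lshift n) t) F.2 o = 0.
  move=> tk; have [<- <-] := dz_multi_dx sF1 sF2 dF (eq_leq tk).
  by apply: dz0; rewrite mindex_size_count tk.
have Fk := iter_partial_eq0_of_dx sF1 sF2 dF dx0.
split=> s; rewrite ltnS leq_eqVlt iter_partial0 => /orP[/eqP/Fk[] // | sk].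
  by rewrite F1k // iter_partial0.
by rewrite F2k // iter_partial0.
Qed.

Section Holomorphic.
Variables (J : V -> 'M[R]_(n + n)) (u v : V -> R).
Hypothesis acJ : almost_complex_on U J.
Hypothesis T10_o : forall j : 'I_n,
  in_T10 (J o) (2^-1 *: @ex R n j) (- (2^-1 *: @ey R n j)).
Hypotheses (su : smooth u) (sv : smooth v) (hol : holomorphic_on U J u v).

Lemma holomorphic_cr p k : U p ->
  partial k u p = dR v p (eb k *m J p) /\ partial k v p = - dR u p (eb k *m J p).
Proof.
move=> Up; have T01 : in_T01 (J p) (eb k) (eb k *m J p).
  by split=> //; rewrite -mulmxA (acJ.2 p Up) mulmxN mulmx1.
have [h1 h2] := hol Up T01; rewrite !dR_ebasis in h1 h2.
by split; apply/eqP; [rewrite -subr_eq0 h1 | rewrite -addr_eq0 h2].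
Qed.

Lemma ey_mul_J_o j : @ey R n j *m J o = - @ex R n j.
Proof.
have [_] := T10_o j; rewrite mulNmx -scalemxAl => E.
apply: (@scalerI _ _ 2^-1); first by rewrite invr_eq0 pnatr_eq0.
by rewrite scalerN -E opprK.
Qed.

(** Since [ey j *m J o = - ex j], the Cauchy-Riemann relations at [p] express [dzbar j f]
    through the entries of [J p - J o]. *)
Definition Jdev (j : 'I_n) (l : 'I_(n + n)) : V -> R :=
  fun p => J p (rshift n j) l - J o (rshift n j) l.

Lemma dzbar_holomorphic j :
  {in U, (dzbar j (u, v)).1 =1 2^-1 \*o \sum_l Jdev j l * partial l u} /\
  {in U, (dzbar j (u, v)).2 =1 2^-1 \*o \sum_l Jdev j l * partial l v}.
Proof.
have dR_Jdev g p : dR g p (@ey R n j *m J p) - dR g p (@ey R n j *m J o) =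
                   (\sum_l Jdev j l * partial l g) p.
  rewrite /dR -sumrB fct_sumE; apply: eq_bigr => l _.
  by rewrite !fctE /Jdev /ey !ebasisM mulrBl.
have dx_o g p : partial (lshift n j) g p = - dR g p (@ey R n j *m J o).
  rewrite ey_mul_J_o -dR_ebasis /dR -sumrN; apply: eq_bigr => l _.
  by rewrite !mxE mulNr opprK.
split=> p /set_mem Up /=; have [cr_u cr_v] := holomorphic_cr (rshift n j) Up.
  rewrite -[(_ - _) p]/(dx j u p - dy j v p).
  by rewrite dx_o cr_v -dR_Jdev opprK addrC.
rewrite -[(_ + _) p]/(dx j v p + dy j u p).
by rewrite dx_o cr_u -dR_Jdev addrC.
Qed.

Lemma jet_eq0_Jdev_sum j k w : smooth w -> jet_eq k w 0 ->
  jet_eq k (2^-1 \*o \sum_l Jdev j l * partial l w) 0.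
Proof.
move=> sw w0; have sJdev l : smooth (Jdev j l).
  exact: smooth_onB (acJ.1 (rshift n j) l) (smooth_on_cst (J o (rshift n j) l)).
have Jdev0 l : jet_eq 1 (Jdev j l) 0 by case=> // _; rewrite iter_partial0 /= /Jdev subrr.
have sS : smooth (\sum_l Jdev j l * partial l w).
  by apply: smooth_on_sum => l _; exact: smooth_onM (sJdev l) (smooth_on_partial l sw).
have S0 : jet_eq k (\sum_l Jdev j l * partial l w) 0.
  apply: jet_eq0_sum => l _; first exact: smooth_onM (sJdev l) (smooth_on_partial l sw).
  apply: (@jet_eq_le _ (1 + k.-1)); first by lia.
  exact: jet_eq0M (sJdev l) (smooth_on_partial l sw) (Jdev0 l) (jet_eq0_partial l w0).
by move=> s sk; rewrite (iter_partialZ s _ sS oU) /= S0 // !iter_partial0 mulr0.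
Qed.

Lemma dzbar_ord_ge_holomorphic k : jet_eq k u 0 -> jet_eq k v 0 -> dzbar_ord_ge k (u, v).
Proof.
move=> u0 v0 j; have [E1 E2] := dzbar_holomorphic j.
split; first exact: jet_eq_trans (eq_in_jet_eq E1) (jet_eq0_Jdev_sum j su u0).
exact: jet_eq_trans (eq_in_jet_eq E2) (jet_eq0_Jdev_sum j sv v0).
Qed.

End Holomorphic.

End Jets.
End SmoothOn.

Theorem lemma4p4 (R : realType) (n : nat) (U : set 'rV[R]_(n + n))
  (J : 'rV[R]_(n + n) -> 'M[R]_(n + n)) (o : 'rV[R]_(n + n))
  (u v : 'rV[R]_(n + n) -> R) (m : nat) :
  open U -> U o ->
  almost_complex_on U J ->
  (forall j : 'I_n, in_T10 (J o) (2^-1 *: @ex R n j) (- (2^-1 *: @ey R n j))) ->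
  smooth_on U u -> smooth_on U v ->
  holomorphic_on U J u v ->
  (forall alpha : 'I_n -> nat, (mindex_size alpha <= m)%N ->
     (dz_multi alpha (u, v)).1 o = 0 /\ (dz_multi alpha (u, v)).2 o = 0) ->
  ord_ge u v o m.+1.
Proof.
move=> openU Uo acJ T10_o su sv hol dz0; apply/ord_geE.
apply: (jet_eq0_dz_multi openU Uo (F := (u, v)) su sv _ dz0) => k _.
exact: dzbar_ord_ge_holomorphic acJ T10_o su sv hol k.
Qed.
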